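(* There is an absolute constant $C$ such that for every $\alpha>0$ and every classical ($C^2$) solution $u$ of the equivariant Skyrme equation on an open subset of $\{(t,r):r>0\}$, \[ |\partial_\xi(r(e+m))|\le C\big((e+m)(e-m)\big)^{1/2},\qquad |\partial_\eta(r(e-m))|\le C\big((e+m)(e-m)\big)^{1/2}, \] where $\eta=t+r$, $\xi=t-r$ are null coordinates, i.e. $\partial_\xi=\frac12(\partial_t-\partial_r)$, $\partial_\eta=\frac12(\partial_t+\partial_r)$.
   Context: The equivariant Skyrme equation is \[ w(u_{tt}-u_{rr}) - \Big(1-\tfrac{\alpha^2\sin^2u}{r^2}\Big)\tfrac{u_r}{r} + \tfrac{\sin 2u}{2r^2}\big[\alpha^2(u_t^2-u_r^2)+1\big]=0,\qquad w:=1+\tfrac{\alpha^2\sin^2u}{r^2}. \] Energy density $e:=w\frac{u_t^2+u_r^2}{2}+\frac{\sin^2u}{2r^2}$, momentum density $m:=w u_tu_r$ (note $e\pm m\ge0$). *)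

From Stdlib Require Import Reals Lra.
Open Scope R_scope.

Definition open2 (U : R -> R -> Prop) : Prop :=
  forall t r, U t r -> exists d, 0 < d /\
    forall t' r', Rabs (t' - t) < d -> Rabs (r' - r) < d -> U t' r'.

Definition in_half_plane (U : R -> R -> Prop) : Prop :=
  forall t r, U t r -> 0 < r.

Definition cont2_on (U : R -> R -> Prop) (f : R -> R -> R) : Prop :=
  forall t r, U t r -> forall eps, 0 < eps -> exists d, 0 < d /\
    forall t' r', U t' r' -> Rabs (t' - t) < d -> Rabs (r' - r) < d ->
      Rabs (f t' r' - f t r) < eps.

Definition C2_on (U : R -> R -> Prop) (u ut ur utt utr urt urr : R -> R -> R)
  : Prop :=
  (forall t r, U t r ->
     derivable_pt_lim (fun s => u s r) t (ut t r) /\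
     derivable_pt_lim (fun s => u t s) r (ur t r) /\
     derivable_pt_lim (fun s => ut s r) t (utt t r) /\
     derivable_pt_lim (fun s => ut t s) r (utr t r) /\
     derivable_pt_lim (fun s => ur s r) t (urt t r) /\
     derivable_pt_lim (fun s => ur t s) r (urr t r)) /\
  cont2_on U u /\ cont2_on U ut /\ cont2_on U ur /\
  cont2_on U utt /\ cont2_on U utr /\ cont2_on U urt /\ cont2_on U urr.

Definition wfun (alpha uv r : R) : R := 1 + alpha^2 * (sin uv)^2 / r^2.

Definition skyrme_eq (alpha : R) (U : R -> R -> Prop)
  (u ut ur utt urr : R -> R -> R) : Prop :=
  forall t r, U t r ->
    wfun alpha (u t r) r * (utt t r - urr t r)
    - (1 - alpha^2 * (sin (u t r))^2 / r^2) * (ur t r / r)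
    + sin (2 * u t r) / (2 * r^2)
        * (alpha^2 * ((ut t r)^2 - (ur t r)^2) + 1) = 0.

Definition edens (alpha : R) (u ut ur : R -> R -> R) (t r : R) : R :=
  wfun alpha (u t r) r * ((ut t r)^2 + (ur t r)^2) / 2
  + (sin (u t r))^2 / (2 * r^2).

Definition mdens (alpha : R) (u ut ur : R -> R -> R) (t r : R) : R :=
  wfun alpha (u t r) r * ut t r * ur t r.

From Coquelicot Require Import Coquelicot.
From Stdlib Require Import Reals Lra Psatz.
Open Scope R_scope.

(* Write a = u_t + u_r, b = u_t - u_r, W = w and s = sin u / r.  Then
   e + m = W a^2/2 + s^2/2 and e - m = W b^2/2 + s^2/2.  Differentiating
   r(e + m) along the null line l |-> (t + l/2, r - l/2) by the chain rule and
   eliminating u_tt - u_rr with the Skyrme equation (and u_tr = u_rt) leaves the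
   first-order "source"
       N = -(1 - alpha^2 sin^2 u / r^2) a b / 4 - s cos u (a - b) / 2 + s^2 / 4,
   and the same computation along (t + l/2, r + l/2) gives -N for r(e - m).
   Each of the three terms of N is bounded by a multiple of
   sqrt((e + m)(e - m)), giving the absolute constant C = 3. *)

(* If f has t-derivative ft near (t, r) and ft is continuous at (t, r), then the
   t-increment of f along the line (t + a s, r + b s) has derivative a ft(t, r)
   at s = 0 (mean value theorem in t, uniformly in the second variable). *)
Lemma increment_deriv (f ft : R -> R -> R) (t r a b : R) :
  locally_2d (fun x y => derivable_pt_lim (fun s => f s y) x (ft x y)) t r ->
  continuity_2d_pt ft t r ->
  derivable_pt_lim (fun s => f (t + a * s) (r + b * s) - f t (r + b * s)) 0 (a * ft t r).
Proof.
  intros Hder Hcont eps Heps.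
  assert (Hscale : 0 < Rabs a + 1) by (pose proof (Rabs_pos a); lra).
  assert (Heps' : 0 < eps / (Rabs a + 1)) by (apply Rdiv_lt_0_compat; lra).
  destruct (locally_2d_and _ _ t r Hder (Hcont (mkposreal _ Heps'))) as [d Hd]; simpl in Hd.
  assert (Hnorm : 0 < Rabs a + Rabs b + 1)
    by (pose proof (Rabs_pos a); pose proof (Rabs_pos b); lra).
  assert (Hd' : 0 < d / (Rabs a + Rabs b + 1)) by (apply Rdiv_lt_0_compat; [apply cond_pos | lra]).
  exists (mkposreal _ Hd'). intros h Hh0 Hh. simpl in Hh.
  assert (Hsmall : Rabs (a * h) < d /\ Rabs (b * h) < d).
  { apply Rlt_div_r in Hh; [|lra]. rewrite !Rabs_mult.
    pose proof (Rabs_pos a); pose proof (Rabs_pos b); pose proof (Rabs_pos h).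
    split; nra. }
  destruct Hsmall as [Hah Hbh].
  assert (Hbh' : Rabs (r + b * h - r) < d) by now replace (r + b * h - r) with (b * h) by ring.
  destruct (MVT_cor4 (fun x => f x (r + b * h)) (fun x => ft x (r + b * h)) t (Rabs (a * h)))
    with (b := t + a * h) as [c [Hmvt Hc]].
  { intros c Hc. apply is_derive_Reals, (Hd c (r + b * h)); [lra | exact Hbh']. }
  { replace (t + a * h - t) with (a * h) by ring. lra. }
  replace (t + a * h - t) with (a * h) in Hmvt, Hc by ring.
  destruct (Hd c (r + b * h) ltac:(lra) Hbh') as [_ Hclose].
  replace (0 + h) with h by ring.
  replace (t + a * 0) with t by ring. replace (r + b * 0) with r by ring.
  rewrite Rminus_diag, Rminus_0_r, Hmvt.
  replace (ft c (r + b * h) * (a * h) / h - a * ft t r)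
    with (a * (ft c (r + b * h) - ft t r)) by (field; auto).
  rewrite Rabs_mult.
  pose proof (Rabs_pos a); pose proof (Rabs_pos (ft c (r + b * h) - ft t r)).
  assert (Heq : (Rabs a + 1) * (eps / (Rabs a + 1)) = eps) by (field; lra).
  nra.
Qed.

Lemma line_deriv (f ft : R -> R -> R) (fr t r a b : R) :
  locally_2d (fun x y => derivable_pt_lim (fun s => f s y) x (ft x y)) t r ->
  continuity_2d_pt ft t r ->
  derivable_pt_lim (fun s => f t s) r fr ->
  derivable_pt_lim (fun s => f (t + a * s) (r + b * s)) 0 (a * ft t r + b * fr).
Proof.
  intros Hder Hcont Hr.
  apply (derivable_pt_lim_ext
    (fun s => (f (t + a * s) (r + b * s) - f t (r + b * s)) + f t (r + b * s))).
  { intros s. ring. }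
  apply derivable_pt_lim_plus; [now apply increment_deriv |].
  rewrite Rmult_comm.
  apply (derivable_pt_lim_comp (fun s => r + b * s) (fun s => f t s)).
  - apply is_derive_Reals. auto_derive; [easy | ring].
  - now replace (r + b * 0) with r by ring.
Qed.

Lemma locally_2d_of_open (U P : R -> R -> Prop) (t r : R) :
  open2 U -> U t r -> (forall x y, U x y -> P x y) -> locally_2d P t r.
Proof.
  intros HU Htr HP. destruct (HU t r Htr) as [d [Hd HUd]].
  exists (mkposreal d Hd). intros x y Hx Hy. apply HP, HUd; assumption.
Qed.

Lemma cont2_on_continuity_2d (U : R -> R -> Prop) (g : R -> R -> R) (t r : R) :
  open2 U -> U t r -> cont2_on U g -> continuity_2d_pt g t r.
Proof.
  intros HU Htr Hg eps.
  destruct (Hg t r Htr eps (cond_pos eps)) as [d [Hd Hclose]].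
  apply (locally_2d_impl U); [| now apply (locally_2d_of_open U)].
  exists (mkposreal d Hd). intros x y Hx Hy Hxy. exact (Hclose x y Hxy Hx Hy).
Qed.

(* The chain rule along the null direction (1/2, sg/2), i.e. d_eta for sg = 1
   and d_xi for sg = -1, for a function with C^1-type partials on U. *)
Lemma null_line_deriv (U : R -> R -> Prop) (f ft : R -> R -> R) (fr t r sg : R) :
  open2 U -> U t r ->
  (forall x y, U x y -> derivable_pt_lim (fun s => f s y) x (ft x y)) ->
  cont2_on U ft -> derivable_pt_lim (fun s => f t s) r fr ->
  derivable_pt_lim (fun s => f (t + s / 2) (r + sg * s / 2)) 0 ((ft t r + sg * fr) / 2).
Proof.
  intros HU Htr Hder Hcont Hr.
  apply (derivable_pt_lim_ext (fun s => f (t + / 2 * s) (r + sg / 2 * s))).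
  { intros s. f_equal; field. }
  replace ((ft t r + sg * fr) / 2) with (/ 2 * ft t r + sg / 2 * fr) by field.
  apply line_deriv;
    [now apply (locally_2d_of_open U) | now apply (cont2_on_continuity_2d U) | exact Hr].
Qed.

Lemma mixed_partials_eq (U : R -> R -> Prop) (u ut ur utr urt : R -> R -> R) (t r : R) :
  open2 U -> U t r ->
  (forall x y, U x y ->
     derivable_pt_lim (fun s => u s y) x (ut x y) /\
     derivable_pt_lim (fun s => u x s) y (ur x y) /\
     derivable_pt_lim (fun s => ut x s) y (utr x y) /\
     derivable_pt_lim (fun s => ur s y) x (urt x y)) ->
  cont2_on U utr -> cont2_on U urt -> utr t r = urt t r.
Proof.
  intros HU Htr Hd Hutr Hurt.
  assert (Hsecond : forall x y, U x y ->
    is_derive (fun z => Derive (fun s => u z s) y) x (urt x y) /\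
    is_derive (fun z => Derive (fun s => u s z) x) y (utr x y)).
  { intros x y Hxy.
    assert (Hloc : locally_2d U x y) by (apply (locally_2d_of_open U); auto).
    destruct (Hd x y Hxy) as [_ [_ [Hutr_xy Hurt_xy]]].
    split.
    - apply (is_derive_ext_loc (fun z => ur z y)); [| now apply is_derive_Reals].
      apply (filter_imp (fun z => U z y)); [| exact (locally_2d_1d_const_y _ _ _ Hloc)].
      intros z Hz. symmetry. apply is_derive_unique, is_derive_Reals, (Hd z y Hz).
    - apply (is_derive_ext_loc (fun z => ut x z)); [| now apply is_derive_Reals].
      apply (filter_imp (fun z => U x z)); [| exact (locally_2d_1d_const_x _ _ _ Hloc)].
      intros z Hz. symmetry. apply is_derive_unique, is_derive_Reals, (Hd x z Hz). }
  destruct (Hsecond t r Htr) as [Hrt0 Htr0].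
  rewrite <- (is_derive_unique _ _ _ Hrt0), <- (is_derive_unique _ _ _ Htr0).
  symmetry. apply Schwarz.
  - apply (locally_2d_of_open U); auto. intros x y Hxy.
    destruct (Hd x y Hxy) as [Hut [Hur _]]. destruct (Hsecond x y Hxy) as [Hrt_xy Htr_xy].
    repeat split; eexists;
      [apply is_derive_Reals, Hut | apply is_derive_Reals, Hur | exact Hrt_xy | exact Htr_xy].
  - apply (continuity_2d_pt_ext_loc urt); [| now apply (cont2_on_continuity_2d U)].
    apply (locally_2d_of_open U); auto. intros x y Hxy.
    symmetry. apply is_derive_unique, (Hsecond x y Hxy).
  - apply (continuity_2d_pt_ext_loc utr); [| now apply (cont2_on_continuity_2d U)].
    apply (locally_2d_of_open U); auto. intros x y Hxy.
    symmetry. apply is_derive_unique, (Hsecond x y Hxy).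
Qed.

(* Pointwise versions of the densities, the equation and the source term,
   as functions of the values G = u, x = u_t, y = u_r, p = u_tt, q = u_rr
   at radius r; [edens], [mdens] and [skyrme_eq] unfold to these. *)
Definition energy_at (al r G x y : R) : R :=
  wfun al G r * (x^2 + y^2) / 2 + (sin G)^2 / (2 * r^2).

Definition momentum_at (al r G x y : R) : R := wfun al G r * x * y.

Definition skyrme_at (al r G x y p q : R) : R :=
  wfun al G r * (p - q) - (1 - al^2 * (sin G)^2 / r^2) * (y / r)
  + sin (2 * G) / (2 * r^2) * (al^2 * (x^2 - y^2) + 1).

Definition null_source (al r G x y : R) : R :=
  - (1 - al^2 * (sin G)^2 / r^2) * (x^2 - y^2) / 4
  - sin G * cos G * y / r + (sin G)^2 / (4 * r^2).

Lemma eq_of_diff_multiple (A B c E : R) : E = 0 -> A - B = c * E -> A = B.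
Proof. intros HE Hdiff. rewrite HE, Rmult_0_r in Hdiff. lra. Qed.

(* Along a null line with direction sg = -1 or 1,
   let g, h, k be the restrictions of u, u_t, u_r; their derivatives are
   (u_t + sg u_r)/2, (u_tt + sg u_tr)/2 and (u_tr + sg u_rr)/2 (z stands for the
   common value of the mixed derivatives). *)
Lemma null_flux_chain (sg al r G : R) (g h k : R -> R) (x y p q z : R) :
  sg = 1 \/ sg = -1 -> r <> 0 ->
  derivable_pt_lim g 0 ((x + sg * y) / 2) ->
  derivable_pt_lim h 0 ((p + sg * z) / 2) ->
  derivable_pt_lim k 0 ((z + sg * q) / 2) ->
  g 0 = G -> h 0 = x -> k 0 = y -> skyrme_at al r G x y p q = 0 ->
  derivable_pt_lim (fun s => (r + sg * s / 2) *
      (energy_at al (r + sg * s / 2) (g s) (h s) (k s)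
       - sg * momentum_at al (r + sg * s / 2) (g s) (h s) (k s)))
    0 (- sg * null_source al r G x y).
Proof.
  intros Hsg Hr Hg Hh Hk Hg0 Hh0 Hk0 Hsk.
  apply is_derive_Reals in Hg, Hh, Hk. apply is_derive_Reals.
  unfold energy_at, momentum_at, wfun.
  auto_derive.
  - replace (r + sg * 0 * / 2) with r by ring.
    repeat split; try (eexists; eassumption); intro Hzero; apply Hr; nra.
  - replace (Derive (fun s => g s) 0) with ((x + sg * y) / 2)
      by (symmetry; now apply is_derive_unique).
    replace (Derive (fun s => h s) 0) with ((p + sg * z) / 2)
      by (symmetry; now apply is_derive_unique).
    replace (Derive (fun s => k s) 0) with ((z + sg * q) / 2)
      by (symmetry; now apply is_derive_unique).
    replace (r + sg * 0 * / 2) with r by ring.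
    rewrite Hg0, Hh0, Hk0.
    unfold skyrme_at, wfun in Hsk. rewrite sin_2a in Hsk.
    apply (eq_of_diff_multiple _ _ (r * (x - sg * y) / 2) _ Hsk).
    unfold null_source.
    destruct Hsg as [-> | ->]; field; exact Hr.
Qed.

Lemma abs_le_sqrt (z P : R) : z^2 <= P -> Rabs z <= sqrt P.
Proof.
  intros Hz. rewrite <- sqrt_Rsqr_abs. apply sqrt_le_1_alt. unfold Rsqr. lra.
Qed.

(* The estimate on N in the variables a = x + y, b = x - y, s = sin u / r,
   v = alpha^2 sin^2 u / r^2, c = cos u, with P = (e + m)(e - m): each of the
   three terms (momentum, cross and potential term) is at most a multiple of
   sqrt P, using 0 <= v and c^2 <= 1. *)
Lemma source_bound_core (v s c a b : R) : 0 <= v -> c^2 <= 1 ->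
  Rabs (- (1 - v) * (a * b) / 4 - s * c * (a - b) / 2 + s^2 / 4)
  <= 3 * sqrt (((1 + v) * a^2 / 2 + s^2 / 2) * ((1 + v) * b^2 / 2 + s^2 / 2)).
Proof.
  intros Hv Hc.
  set (P := ((1 + v) * a^2 / 2 + s^2 / 2) * ((1 + v) * b^2 / 2 + s^2 / 2)).
  assert (HA : 0 <= (1 + v) * a^2 / 2) by nra.
  assert (HB : 0 <= (1 + v) * b^2 / 2) by nra.
  assert (Hs : 0 <= s^2 / 2) by nra.
  assert (Hprod : (1 + v)^2 * a^2 * b^2 / 4 + s^2 / 2 * ((1 + v) * (a^2 + b^2) / 2) + (s^2/2)^2 <= P)
    by (unfold P; nra).
  assert (Hmom : Rabs ((1 - v) * (a * b) / 2) <= sqrt P).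
  { apply abs_le_sqrt. nra. }
  assert (Hcross : Rabs (s * c * (a - b) / 4) <= sqrt P).
  { apply abs_le_sqrt.
    assert (Hcos : (s * c * (a - b))^2 <= (s * (a - b))^2).
    { replace ((s * c * (a - b))^2) with (c^2 * (s * (a - b))^2) by ring.
      rewrite <- (Rmult_1_l ((s * (a - b))^2)) at 2.
      apply Rmult_le_compat_r; [apply pow2_ge_0 | exact Hc]. }
    assert (Hpar : (s * (a - b))^2 <= 2 * s^2 * (a^2 + b^2))
      by (pose proof (pow2_ge_0 (s * (a + b))); nra).
    assert (0 <= s^2 * v * (a^2 + b^2)) by (apply Rmult_le_pos; nra).
    assert (0 <= (1 + v)^2 * a^2 * b^2) by (pose proof (pow2_ge_0 ((1 + v) * a * b)); nra).
    nra. }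
  assert (Hpot : Rabs (s^2 / 2) <= sqrt P).
  { apply abs_le_sqrt. nra. }
  apply Rabs_le_between in Hmom, Hcross, Hpot.
  apply Rabs_le_between. lra.
Qed.

Lemma null_source_bound (al r G x y : R) : 0 < r ->
  Rabs (null_source al r G x y)
  <= 3 * sqrt ((energy_at al r G x y + momentum_at al r G x y)
               * (energy_at al r G x y - momentum_at al r G x y)).
Proof.
  intros Hr.
  set (v := al^2 * (sin G)^2 / r^2).
  set (s := sin G / r).
  replace (null_source al r G x y) with
    (- (1 - v) * ((x + y) * (x - y)) / 4 - s * cos G * ((x + y) - (x - y)) / 2 + s^2 / 4)
    by (unfold null_source, v, s; field; lra).
  replace ((energy_at al r G x y + momentum_at al r G x y)
           * (energy_at al r G x y - momentum_at al r G x y)) with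
    (((1 + v) * (x + y)^2 / 2 + s^2 / 2) * ((1 + v) * (x - y)^2 / 2 + s^2 / 2))
    by (unfold energy_at, momentum_at, wfun, v, s; field; lra).
  apply source_bound_core.
  - unfold v, Rdiv. apply Rmult_le_pos; [nra | apply Rlt_le, Rinv_0_lt_compat; nra].
  - pose proof (sin2_cos2 G). unfold Rsqr in *. pose proof (pow2_ge_0 (sin G)). nra.
Qed.

Lemma null_flux_deriv (sg alpha : R) (U : R -> R -> Prop)
  (u ut ur utt utr urt urr : R -> R -> R) (t r : R) :
  sg = 1 \/ sg = -1 -> open2 U -> in_half_plane U ->
  C2_on U u ut ur utt utr urt urr -> skyrme_eq alpha U u ut ur utt urr -> U t r ->
  derivable_pt_lim (fun s => (r + sg * s / 2) *
      (edens alpha u ut ur (t + s / 2) (r + sg * s / 2)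
       - sg * mdens alpha u ut ur (t + s / 2) (r + sg * s / 2)))
    0 (- sg * null_source alpha r (u t r) (ut t r) (ur t r)).
Proof.
  intros Hsg HU Hhalf [Hd [_ [Hcut [_ [Hcutt [Hcutr [Hcurt _]]]]]]] Hsk Htr.
  assert (Hr : 0 < r) by exact (Hhalf t r Htr).
  assert (Hmixed : utr t r = urt t r).
  { apply (mixed_partials_eq U u ut ur); auto.
    intros x y Hxy. destruct (Hd x y Hxy) as (Hut & Hur & _ & Hutr & Hurt & _). auto. }
  destruct (Hd t r Htr) as (_ & Hur & _ & Hutr & _ & Hurr).
  apply (null_flux_chain sg alpha r (u t r)
           (fun s => u (t + s / 2) (r + sg * s / 2))
           (fun s => ut (t + s / 2) (r + sg * s / 2))
           (fun s => ur (t + s / 2) (r + sg * s / 2))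
           (ut t r) (ur t r) (utt t r) (urr t r) (utr t r)); try (f_equal; field).
  - exact Hsg.
  - lra.
  - apply (null_line_deriv U u ut); auto. intros x y Hxy. apply (Hd x y Hxy).
  - apply (null_line_deriv U ut utt); auto. intros x y Hxy. apply (Hd x y Hxy).
  - rewrite Hmixed. apply (null_line_deriv U ur urt); auto. intros x y Hxy. apply (Hd x y Hxy).
  - exact (Hsk t r Htr).
Qed.

Theorem mainTheorem9 :
  exists C : R,
  forall (alpha : R) (U : R -> R -> Prop) (u ut ur utt utr urt urr : R -> R -> R),
    0 < alpha ->
    open2 U -> in_half_plane U ->
    C2_on U u ut ur utt utr urt urr ->
    skyrme_eq alpha U u ut ur utt urr ->
    forall t r, U t r ->
      let e := edens alpha u ut ur in
      let m := mdens alpha u ut ur in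
      let Q := sqrt ((e t r + m t r) * (e t r - m t r)) in
      (exists l, derivable_pt_lim
                   (fun s => (r - s/2) * (e (t + s/2) (r - s/2) + m (t + s/2) (r - s/2))) 0 l
                 /\ Rabs l <= C * Q) /\
      (exists l, derivable_pt_lim
                   (fun s => (r + s/2) * (e (t + s/2) (r + s/2) - m (t + s/2) (r + s/2))) 0 l
                 /\ Rabs l <= C * Q).
Proof.
  exists 3.
  intros alpha U u ut ur utt utr urt urr _ HU Hhalf HC2 Hsk t r Htr e m Q.
  pose proof (null_source_bound alpha r (u t r) (ut t r) (ur t r) (Hhalf t r Htr)) as Hbound.
  split.
  -
    pose proof (null_flux_deriv (-1) alpha U u ut ur utt utr urt urr t r
                  ltac:(lra) HU Hhalf HC2 Hsk Htr) as Hxi.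
    exists (- -1 * null_source alpha r (u t r) (ut t r) (ur t r)).
    split; [| now rewrite Rabs_mult, Rabs_Ropp, Rabs_m1, Rmult_1_l].
    eapply derivable_pt_lim_ext; [| exact Hxi].
    intros s. unfold e, m. replace (r + -1 * s / 2) with (r - s / 2) by field. ring.
  -
    pose proof (null_flux_deriv 1 alpha U u ut ur utt utr urt urr t r
                  ltac:(lra) HU Hhalf HC2 Hsk Htr) as Heta.
    exists (- 1 * null_source alpha r (u t r) (ut t r) (ur t r)).
    split; [| now rewrite Rabs_mult, Rabs_m1, Rmult_1_l].
    eapply derivable_pt_lim_ext; [| exact Heta].
    intros s. unfold e, m. replace (r + 1 * s / 2) with (r + s / 2) by field. ring.
Qed.
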